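(* For each integer $n \ge 2$ and real $\gamma$, consider the infinite graph with vertex set $\mathbb{Z}^+$ in which vertices $1,\ldots,n$ form a complete graph $K_n$, vertices $n,n+1,n+2,\ldots$ form an infinite path (edges $\{k,k+1\}$ for $k\ge n$), and vertex $n$ (the vertex where the path is attached) carries a self-loop of weight $\gamma$. Let $H$ be its adjacency operator on $\ell^2(\mathbb{Z}^+)$: in the standard basis $\{e_j\}$, $\langle e_n,He_n\rangle=\gamma$, $\langle e_i,He_j\rangle=1$ for distinct $i,j\in\{1,\ldots,n\}$, $\langle e_k,He_{k+1}\rangle=\langle e_{k+1},He_k\rangle=1$ for $k\ge n$, all other entries $0$. Let $z_1=n^{-1/2}\sum_{j=1}^n e_j$. If $\gamma = n+\mathcal{O}(1)$, then for $t=\pi/(2\sqrt{n})$, \[ \left|\langle e_n, e^{-itH} z_1\rangle\right| = 1+o(1). \]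
   Context: Asymptotic notation refers to $n\to\infty$, with $\gamma=\gamma_n$ such that $\gamma_n-n$ is bounded. The inner product is $\langle x,y\rangle=\sum_u \overline{x_u}y_u$. *)

From Stdlib Require Import Reals Arith.
From Coquelicot Require Import Coquelicot.
Open Scope R_scope.

(* Vectors on Z^+ are modelled as functions nat -> C; index 0 is unused
   (kept at 0).  All vectors considered below are finitely supported. *)

Definition Hact (n : nat) (gamma : R) (v : nat -> C) : nat -> C :=
  fun i =>
    if Nat.eqb i 0 then RtoC 0 else
    Cplus
     (Cplus
       (if Nat.eqb i n then Cmult (RtoC gamma) (v n) else RtoC 0)
       (if Nat.leb i n
        then sum_n_m (fun j => if Nat.eqb j i then RtoC 0 else v j) 1 n
        else RtoC 0))
     (Cplus
       (if Nat.leb n i then v (S i) else RtoC 0)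
       (if Nat.leb (S n) i then v (pred i) else RtoC 0)).

Definition Hpow (n : nat) (gamma : R) (k : nat) (v : nat -> C) : nat -> C :=
  Nat.iter k (Hact n gamma) v.

Definition z1 (n : nat) : nat -> C :=
  fun j => if andb (Nat.leb 1 j) (Nat.leb j n) then RtoC (/ sqrt (INR n)) else RtoC 0.

(* k-th term of the exponential series for <e_n, e^{-itH} z_1>:
   (-it)^k / k! * <e_n, H^k z_1>   (note <e_n, w> = w_n). *)
Definition amp_term (n : nat) (gamma t : R) (k : nat) : C :=
  Cmult (Cdiv (pow_n (Copp (Cmult Ci (RtoC t))) k) (RtoC (INR (fact k))))
        (Hpow n gamma k (z1 n) n).

(* <e_n, e^{-itH} z_1> : the sum of the (convergent, since H is bounded)
   exponential series. *)
Definition amp (n : nat) (gamma t : R) : C :=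
  lim (T := C_CompleteNormedModule) (filtermap (fun N => sum_n (amp_term n gamma t) N) eventually).

From Stdlib Require Import Reals Arith Lra Lia Psatz.
From Coquelicot Require Import Coquelicot.
Open Scope R_scope.

(* By the symmetry of K_n, H^k z_1 takes a common value on the vertices
   1, ..., n-1, so the amplitude is governed by a reduced operator L acting on
   sequences indexed by that class, vertex n and the path.  Writing
   e^(itL) g = X + iY for the reduced initial vector g, the pair (X, Y) solves
   X' = -LY, Y' = LX, and the amplitude is X_1 - i Y_1.  Cutting the edge
   {n, n+1} leaves a 2x2 system with eigenvalues c +- w, w ~ sqrt n, whose
   solution is explicit and of size O(1).  L is symmetric for the weights
   (n-1, 1, 1, ...), so the weighted distance between the two solutions grows
   at a rate bounded by the O(1) coupling across the cut edge; at time
   T = pi / (2 sqrt n) it is therefore O(1 / sqrt n).  Since wT -> pi/2, the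
   cut solution has modulus 1 + o(1) at vertex n at time T. *)

Lemma sum_n_m_RtoC (f : nat -> R) (m : nat) :
  sum_n_m (fun j => RtoC (f j)) 1 m = RtoC (sum_n_m f 1 m).
Proof.
  induction m as [|m IHm].
  - rewrite !sum_n_m_zero by lia. reflexivity.
  - rewrite (sum_n_m_Chasles _ 1 m (S m)), (sum_n_m_Chasles f 1 m (S m)) by lia.
    rewrite IHm, !sum_n_n. unfold plus; simpl. now rewrite RtoC_plus.
Qed.

Lemma sum_n_pair (f g : nat -> R) (N : nat) :
  sum_n (fun k => ((f k, g k) : C)) N = (sum_n f N, sum_n g N).
Proof.
  induction N as [|N IHN]; [now rewrite !sum_O|].
  now rewrite !sum_Sn, IHN.
Qed.

Lemma lim_filtermap_eventually (K : AbsRing) (V : CompleteNormedModule K)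
  (s : nat -> V) (l : V) :
  filterlim s eventually (locally l) -> lim (filtermap s eventually) = l.
Proof.
  intros Hs.
  assert (HP : ProperFilter (filtermap s eventually))
    by apply filtermap_proper_filter, eventually_filter.
  assert (Hc : cauchy (filtermap s eventually)).
  { apply cauchy_distance. intros eps.
    exists (ball l (pos_div_2 eps)). split.
    - apply Hs. now exists (pos_div_2 eps).
    - intros u v Hu Hv. replace (pos eps) with (pos_div_2 eps + pos_div_2 eps) by (simpl; field).
      eapply ball_triangle; [apply ball_sym, Hu | exact Hv]. }
  apply (@is_filter_lim_unique K V (filtermap s eventually) (Proper_StrongProper _ HP)).
  - intros P [eps Heps]. eapply filter_imp; [apply Heps|]. exact (complete_cauchy _ HP Hc eps).
  - exact Hs.
Qed.

Lemma pow_div_fact_le_exp (y : R) (k : nat) : 0 <= y -> y ^ k / INR (fact k) <= exp y.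
Proof.
  intros Hy. destruct k as [|k].
  - simpl. pose proof (exp_ineq1_le y). lra.
  - pose proof (exp_ge_taylor y (S k) Hy) as H. rewrite tech5 in H.
    assert (0 <= sum_f_R0 (fun j => y ^ j / INR (fact j)) k).
    { apply cond_pos_sum. intros j. apply Rmult_le_pos; [now apply pow_le|].
      apply Rlt_le, Rinv_0_lt_compat, INR_fact_lt_0. }
    lra.
Qed.

Lemma is_series_scal_exp (c y : R) :
  is_series (fun k => c * (y ^ k / INR (fact k))) (c * exp y).
Proof.
  pose proof (is_series_scal c _ _ (is_exp_Reals y)) as H.
  eapply is_series_ext; [|exact H]. intros k. simpl. rewrite pow_n_pow.
  unfold scal; simpl. unfold mult; simpl. field. apply INR_fact_neq_0.
Qed.

Lemma PSeries_exp_bound (a : nat -> R) (c L : R) : 0 <= L ->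
  (forall k, Rabs (a k) <= c * L ^ k / INR (fact k)) -> forall x,
  Rbar_lt (Rabs x) (CV_radius a) /\ Rabs (PSeries a x) <= c * exp (L * Rabs x).
Proof.
  intros HL Ha x.
  assert (Hc : 0 <= c).
  { specialize (Ha 0%nat). simpl in Ha. pose proof (Rabs_pos (a 0%nat)). lra. }
  assert (Hterm : forall y k, Rabs (a k * y ^ k) <= c * ((L * Rabs y) ^ k / INR (fact k))).
  { intros y k. rewrite Rabs_mult, <- RPow_abs, Rpow_mult_distr.
    pose proof (pow_le (Rabs y) k (Rabs_pos y)). pose proof (INR_fact_lt_0 k).
    replace (c * (L ^ k * Rabs y ^ k / INR (fact k)))
      with ((c * L ^ k / INR (fact k)) * Rabs y ^ k) by (field; lra).
    now apply Rmult_le_compat_r. }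
  split.
  - assert (Hle : Rbar_le (Rabs x + 1) (CV_radius a)).
    { apply CV_radius_bounded. exists (c * exp (L * Rabs (Rabs x + 1))).
      intros k. eapply Rle_trans; [apply Hterm|]. apply Rmult_le_compat_l; [exact Hc|].
      apply pow_div_fact_le_exp. apply Rmult_le_pos; [exact HL | apply Rabs_pos]. }
    eapply Rbar_lt_le_trans; [|exact Hle]. simpl. lra.
  - assert (Hconv : ex_series (fun k => Rabs (a k * x ^ k))).
    { apply (@ex_series_le R_AbsRing R_CompleteNormedModule _
               (fun k => c * ((L * Rabs x) ^ k / INR (fact k)))).
      - intros k. unfold norm; simpl. unfold abs; simpl. rewrite Rabs_Rabsolu. apply Hterm.
      - eexists. apply is_series_scal_exp. }
    unfold PSeries. eapply Rle_trans; [now apply Series_Rabs|].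
    rewrite <- (is_series_unique _ _ (is_series_scal_exp c (L * Rabs x))).
    apply Series_le.
    + intros k. split; [apply Rabs_pos | apply Hterm].
    + eexists. apply is_series_scal_exp.
Qed.

Lemma PSeries_lin (a b : nat -> R) (u v x : R) : ex_pseries a x -> ex_pseries b x ->
  PSeries (fun k => u * a k + v * b k) x = u * PSeries a x + v * PSeries b x.
Proof.
  intros Ha Hb.
  rewrite <- !PSeries_scal, <- PSeries_plus by (apply ex_pseries_scal; auto using Rmult_comm).
  reflexivity.
Qed.

Lemma ex_pseries_lin (a b : nat -> R) (u v x : R) : ex_pseries a x -> ex_pseries b x ->
  ex_pseries (fun k => u * a k + v * b k) x.
Proof.
  intros Ha Hb.
  apply (ex_pseries_plus (PS_scal u a) (PS_scal v b));
    apply ex_pseries_scal; auto using Rmult_comm.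
Qed.

Lemma is_derive_Rplus (f g : R -> R) (t df dg : R) :
  is_derive f t df -> is_derive g t dg -> is_derive (fun s => f s + g s) t (df + dg).
Proof. intros. now apply (is_derive_plus f g). Qed.

Lemma is_derive_Rminus (f g : R -> R) (t df dg : R) :
  is_derive f t df -> is_derive g t dg -> is_derive (fun s => f s - g s) t (df - dg).
Proof. intros. now apply (is_derive_minus f g). Qed.

Lemma is_derive_Rsqr (f : R -> R) (t df : R) :
  is_derive f t df -> is_derive (fun s => f s ^ 2) t (2 * f t * df).
Proof.
  intros Hf. apply (is_derive_ext (fun s => f s * f s)); [intros s; simpl; ring|].
  replace (2 * f t * df) with (df * f t + f t * df) by ring.
  apply (is_derive_mult f f); auto. intros; apply Rmult_comm.
Qed.

Lemma is_derive_eq (f : R -> R) (t d1 d2 : R) : is_derive f t d1 -> d1 = d2 -> is_derive f t d2.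
Proof. now intros H <-. Qed.

Lemma exp_le_compat (x y : R) : x <= y -> exp x <= exp y.
Proof.
  intros Hxy. destruct (Rle_lt_or_eq_dec x y Hxy) as [Hlt | ->]; [|lra].
  now apply Rlt_le, exp_increasing.
Qed.

Lemma half_pow_antimono (i j : nat) : (i <= j)%nat -> (/ 2) ^ j <= (/ 2) ^ i.
Proof.
  intros Hij. rewrite !pow_inv. apply Rinv_le_contravar; [apply pow_lt; lra|].
  apply Rle_pow; [lra | exact Hij].
Qed.

Lemma cross_le_norm_mul (a b c d : R) :
  b * c - a * d <= sqrt (a ^ 2 + b ^ 2) * sqrt (c ^ 2 + d ^ 2).
Proof.
  rewrite <- sqrt_mult by nra.
  eapply Rle_trans; [apply Rle_abs|]. rewrite <- sqrt_Rsqr_abs. apply sqrt_le_1_alt.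
  assert (Hlagrange : (b * c - a * d) ^ 2 + (a * c + b * d) ^ 2
                      = (a ^ 2 + b ^ 2) * (c ^ 2 + d ^ 2)) by ring.
  pose proof (pow2_ge_0 (a * c + b * d)). unfold Rsqr. simpl in *. lra.
Qed.

Lemma norm2_reverse_triangle (a b c e : R) :
  Rabs (sqrt (a ^ 2 + b ^ 2) - sqrt (c ^ 2 + e ^ 2)) <= sqrt ((a - c) ^ 2 + (b - e) ^ 2).
Proof.
  pose proof (Cmod_triangle ((a - c, b - e) : C) (c, e)) as H1.
  pose proof (Cmod_triangle ((c - a, e - b) : C) (a, b)) as H2.
  unfold Cmod, Cplus in H1, H2. simpl in H1, H2.
  replace (a - c + c) with a in H1 by ring. replace (b - e + e) with b in H1 by ring.
  replace (c - a + a) with c in H2 by ring. replace (e - b + b) with e in H2 by ring.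
  replace ((c - a) * ((c - a) * 1) + (e - b) * ((e - b) * 1))
    with ((a - c) * ((a - c) * 1) + (b - e) * ((b - e) * 1)) in H2 by ring.
  apply Rabs_le. simpl. lra.
Qed.

(* Regularising by [eta] keeps the square root differentiable where [E] vanishes. *)
Lemma sqrt_growth (E dE : R -> R) (a b T eta : R) :
  0 <= T -> 0 < eta -> 0 <= a -> 0 <= b ->
  (forall t, is_derive E t (dE t)) -> (forall t, 0 <= E t) -> E 0 = 0 ->
  (forall t, 0 <= t <= T -> dE t <= 2 * a * sqrt (E t) + b) ->
  sqrt (E T) <= sqrt eta + T * (a + b / (2 * sqrt eta)).
Proof.
  intros HT Heta Ha Hb HE HEpos HE0 HdE.
  set (F := fun t => sqrt (E t + eta)).
  set (dF := fun t => dE t / (2 * sqrt (E t + eta))).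
  assert (HF : forall t, is_derive F t (dF t)).
  { intros t. apply (is_derive_sqrt (fun s => E s + eta)).
    - eapply is_derive_eq; [apply is_derive_Rplus; [apply HE | apply is_derive_const]|].
      unfold zero; simpl; ring.
    - specialize (HEpos t). lra. }
  destruct (MVT_gen F 0 T dF) as [c [Hc Hmvt]].
  { intros; apply HF. }
  { intros x _. apply continuity_pt_filterlim.
    apply (@ex_derive_continuous R_AbsRing R_NormedModule F x). eexists. apply HF. }
  rewrite Rmin_left, Rmax_right in Hc by lra.
  assert (Hseta : 0 < sqrt eta) by now apply sqrt_lt_R0.
  assert (Hs : sqrt eta <= sqrt (E c + eta)) by (apply sqrt_le_1_alt; specialize (HEpos c); lra).
  assert (HsE : sqrt (E c) <= sqrt (E c + eta)) by (apply sqrt_le_1_alt; lra).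
  assert (HdF : dF c <= a + b / (2 * sqrt eta)).
  { unfold dF. set (s := sqrt (E c + eta)) in *.
    assert (b / (2 * s) <= b / (2 * sqrt eta)).
    { apply Rmult_le_compat_l; [exact Hb|]. apply Rinv_le_contravar; lra. }
    assert (dE c / (2 * s) <= a + b / (2 * s)); [|lra].
    apply (Rmult_le_reg_r (2 * s)); [lra|].
    field_simplify; try lra. specialize (HdE c Hc). nra. }
  assert (HF0 : F 0 = sqrt eta) by (unfold F; now rewrite HE0, Rplus_0_l).
  assert (HFT : sqrt (E T) <= F T) by (apply sqrt_le_1_alt; specialize (HEpos T); lra).
  assert (dF c * (T - 0) <= (a + b / (2 * sqrt eta)) * T) by
    (rewrite Rminus_0_r; now apply Rmult_le_compat_r).
  lra.
Qed.

Lemma inv_INR_lim : is_lim_seq (fun n => / INR n) 0.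
Proof. apply (is_lim_seq_inv _ _ is_lim_seq_INR). discriminate. Qed.

Lemma bounded_div_INR_lim (u : nat -> R) (D : R) :
  (forall n, Rabs (u n) <= D) -> is_lim_seq (fun n => u n / INR n) 0.
Proof.
  intros Hu.
  apply (is_lim_seq_le_le_loc (fun n => - D * / INR n) _ (fun n => D * / INR n)).
  - exists 1%nat. intros n Hn. assert (0 < / INR n) by (apply Rinv_0_lt_compat, (lt_INR 0); lia).
    pose proof (proj1 (Rabs_le_between _ _) (Hu n)). unfold Rdiv. split; nra.
  - replace (Finite 0) with (Rbar_mult (- D) 0) by (simpl; f_equal; ring).
    apply is_lim_seq_scal_l, inv_INR_lim.
  - replace (Finite 0) with (Rbar_mult D 0) by (simpl; f_equal; ring).
    apply is_lim_seq_scal_l, inv_INR_lim.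
Qed.

Lemma const_div_sqrt_INR_lim (c : R) : is_lim_seq (fun n => c / sqrt (INR n)) 0.
Proof.
  apply (is_lim_seq_ext (fun n => c * sqrt (/ INR n))); [intros n; now rewrite sqrt_inv|].
  replace (Finite 0) with (Rbar_mult c (sqrt 0)) by (rewrite sqrt_0; simpl; f_equal; ring).
  apply is_lim_seq_scal_l, is_lim_seq_continuous; [apply continuity_pt_sqrt; lra|].
  apply inv_INR_lim.
Qed.

Lemma is_lim_seq_sqr (u : nat -> R) (l : R) :
  is_lim_seq u l -> is_lim_seq (fun n => u n ^ 2) (l ^ 2).
Proof.
  intros Hu. apply (is_lim_seq_ext (fun n => u n * u n)); [intros n; ring|].
  replace (l ^ 2) with (l * l) by ring. now apply is_lim_seq_mult'.
Qed.

(** * Reduction to a chain *)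

(* Index 0 of a chain vector stands for the vertices 1, ..., n-1 (on which
   H^k z_1 is constant by symmetry), index 1 for vertex n and index p >= 2
   for the path vertex n+p-1. *)
Definition chain_lift (n : nat) (w : nat -> R) (i : nat) : R :=
  if Nat.eqb i 0 then 0 else if Nat.ltb i n then w 0%nat else w (i - n + 1)%nat.

Definition chain_op (n : nat) (ga : R) (v : nat -> R) (p : nat) : R :=
  match p with
  | O => (INR n - 2) * v 0%nat + v 1%nat
  | S O => (INR n - 1) * v 0%nat + ga * v 1%nat + v 2%nat
  | S (S q) => v (S q) + v (S (S (S q)))
  end.

Definition chain_init (n : nat) (p : nat) : R :=
  match p with O | S O => / sqrt (INR n) | _ => 0 end.

Definition chain_iter (n : nat) (ga : R) (k : nat) : nat -> R :=
  Nat.iter k (chain_op n ga) (chain_init n).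

Lemma chain_op_scal (n : nat) (ga u : R) (v : nat -> R) (p : nat) :
  chain_op n ga (fun q => u * v q) p = u * chain_op n ga v p.
Proof. destruct p as [|[|q]]; simpl; ring. Qed.

Lemma PSeries_chain_op (n : nat) (ga : R) (a : nat -> nat -> R) (x : R) (p : nat) :
  (forall q, ex_pseries (a q) x) ->
  PSeries (fun k => chain_op n ga (fun q => a q k) p) x
  = chain_op n ga (fun q => PSeries (a q) x) p.
Proof.
  intros Ha. destruct p as [|[|q]]; simpl.
  - rewrite <- (Rmult_1_l (PSeries (a 1%nat) x)), <- PSeries_lin by auto.
    apply PSeries_ext. intros k. ring.
  - transitivity (1 * PSeries (fun k => (INR n - 1) * a 0%nat k + ga * a 1%nat k) x
                   + 1 * PSeries (a 2%nat) x).
    + rewrite <- PSeries_lin by auto using ex_pseries_lin. apply PSeries_ext. intros k. ring.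
    + rewrite PSeries_lin by auto. ring.
  - rewrite <- (Rmult_1_l (PSeries (a (S q)) x)), <- (Rmult_1_l (PSeries (a (S (S (S q)))) x)),
      <- PSeries_lin by auto.
    apply PSeries_ext. intros k. ring.
Qed.

Lemma sum_chain_lift_except_lt (n : nat) (w : nat -> R) (i m : nat) :
  (1 <= i)%nat -> (m < n)%nat ->
  sum_n_m (fun j => if Nat.eqb j i then 0 else chain_lift n w j) 1 m
  = (INR m - (if Nat.leb i m then 1 else 0)) * w 0%nat.
Proof.
  intros Hi. induction m as [|m IHm]; intros Hm.
  - rewrite sum_n_m_zero by lia. destruct (Nat.leb_spec0 i 0); [lia|].
    simpl. unfold zero; simpl. ring.
  - rewrite (sum_n_m_Chasles _ 1 m (S m)), sum_n_n, IHm by lia. unfold chain_lift.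
    destruct (Nat.eqb_spec (S m) i), (Nat.leb_spec0 i m), (Nat.leb_spec0 i (S m));
      try lia; destruct (Nat.ltb_spec0 (S m) n); try lia;
      rewrite ?S_INR; unfold plus; simpl; ring.
Qed.

Lemma sum_chain_lift_except (n : nat) (w : nat -> R) (i : nat) :
  (2 <= n)%nat -> (1 <= i <= n)%nat ->
  sum_n_m (fun j => if Nat.eqb j i then 0 else chain_lift n w j) 1 n
  = if Nat.eqb i n then (INR n - 1) * w 0%nat else (INR n - 2) * w 0%nat + w 1%nat.
Proof.
  intros Hn Hi. replace n with (S (n - 1)) at 1 by lia.
  rewrite (sum_n_m_Chasles _ 1 (n - 1) (S (n - 1))), sum_n_n,
    sum_chain_lift_except_lt by lia.
  replace (S (n - 1)) with n by lia. rewrite minus_INR by lia.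
  unfold plus, chain_lift; simpl.
  destruct (Nat.eqb_spec n i), (Nat.eqb_spec i n), (Nat.leb_spec0 i (n - 1)); try lia;
    destruct (Nat.eqb_spec n 0), (Nat.ltb_spec0 n n); try lia;
    replace (n - n + 1)%nat with 1%nat by lia; simpl; ring.
Qed.

Lemma Hact_chain_lift (n : nat) (ga : R) (v : nat -> C) (w : nat -> R) :
  (2 <= n)%nat -> (forall j, v j = RtoC (chain_lift n w j)) ->
  forall i, Hact n ga v i = RtoC (chain_lift n (chain_op n ga w) i).
Proof.
  intros Hn Hv i. unfold Hact.
  destruct (Nat.eqb_spec i 0) as [->|Hi0]; [reflexivity|].
  assert (Hsum : (i <= n)%nat ->
    sum_n_m (fun j => if Nat.eqb j i then RtoC 0 else v j) 1 n
    = RtoC (if Nat.eqb i n then (INR n - 1) * w 0%nat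
            else (INR n - 2) * w 0%nat + w 1%nat)).
  { intros Hle. rewrite <- sum_chain_lift_except, <- sum_n_m_RtoC by lia.
    apply sum_n_m_ext. intros j. now rewrite Hv; destruct (Nat.eqb j i). }
  destruct (Nat.eqb_spec i n), (Nat.leb_spec0 i n), (Nat.leb_spec0 n i),
    (Nat.leb_spec0 (S n) i); try lia; rewrite ?Hsum, ?Hv by lia; unfold chain_lift;
    destruct (Nat.eqb_spec i 0), (Nat.ltb_spec0 i n); try lia.
  - subst i. destruct (Nat.eqb_spec n n), (Nat.eqb_spec (S n) 0),
      (Nat.ltb_spec0 (S n) n), (Nat.eqb_spec n 0), (Nat.ltb_spec0 n n); try lia.
    replace (n - n + 1)%nat with 1%nat by lia. replace (S n - n + 1)%nat with 2%nat by lia.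
    rewrite <- RtoC_mult, <- !RtoC_plus. f_equal. simpl. ring.
  - rewrite <- !RtoC_plus. f_equal. simpl. ring.
  - destruct (Nat.eqb_spec (S i) 0), (Nat.ltb_spec0 (S i) n),
      (Nat.eqb_spec (pred i) 0), (Nat.ltb_spec0 (pred i) n); try lia.
    replace (i - n + 1)%nat with (S (S (i - n - 1))) by lia.
    replace (S i - n + 1)%nat with (S (S (S (i - n - 1)))) by lia.
    replace (pred i - n + 1)%nat with (S (i - n - 1)) by lia.
    rewrite <- !RtoC_plus. f_equal. simpl. ring.
Qed.

Lemma z1_chain_lift (n : nat) : (2 <= n)%nat ->
  forall i, z1 n i = RtoC (chain_lift n (chain_init n) i).
Proof.
  intros Hn i. unfold z1, chain_lift.
  destruct (Nat.eqb_spec i 0) as [->|]; [reflexivity|].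
  destruct (Nat.leb_spec0 1 i), (Nat.ltb_spec0 i n), (Nat.leb_spec0 i n); try lia;
    simpl; try reflexivity.
  - now replace (i - n + 1)%nat with 1%nat by lia.
  - now destruct (i - n + 1)%nat as [|[|q]] eqn:E; try lia.
Qed.

Lemma Hpow_z1 (n : nat) (ga : R) (k : nat) : (2 <= n)%nat ->
  forall i, Hpow n ga k (z1 n) i = RtoC (chain_lift n (chain_iter n ga k) i).
Proof.
  intros Hn. induction k as [|k IHk]; intros i.
  - now apply z1_chain_lift.
  - now apply Hact_chain_lift.
Qed.

(** * Energy comparison with the cut system *)

Definition chain_solution (n : nat) (ga : R) (X Y : nat -> R -> R) : Prop :=
  (forall p t, is_derive (X p) t (- chain_op n ga (fun q => Y q t) p)) /\
  (forall p t, is_derive (Y p) t (chain_op n ga (fun q => X q t) p)).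

Definition cut_solution (n : nat) (ga : R) (xa ya xb yb : R -> R) : Prop :=
  (forall t, is_derive xa t (-((INR n - 2) * ya t + yb t))) /\
  (forall t, is_derive ya t ((INR n - 2) * xa t + xb t)) /\
  (forall t, is_derive xb t (-((INR n - 1) * ya t + ga * yb t))) /\
  (forall t, is_derive yb t ((INR n - 1) * xa t + ga * xb t)).

Definition flux (X Y : nat -> R -> R) (p : nat) (t : R) : R :=
  Y p t * X (S p) t - X p t * Y (S p) t.

Definition tail_energy (X Y : nat -> R -> R) (m : nat) (t : R) : R :=
  sum_f_R0 (fun j => X (2 + j)%nat t ^ 2 + Y (2 + j)%nat t ^ 2) m.

Lemma tail_energy_derive (X Y : nat -> R -> R) :
  (forall p t, is_derive (X (2 + p)%nat) t (-(Y (1 + p)%nat t + Y (3 + p)%nat t))) ->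
  (forall p t, is_derive (Y (2 + p)%nat) t (X (1 + p)%nat t + X (3 + p)%nat t)) ->
  forall m t, is_derive (tail_energy X Y m) t (2 * (flux X Y (2 + m) t - flux X Y 1 t)).
Proof.
  intros HX HY m t. unfold flux. induction m as [|m IHm]; simpl tail_energy.
  - eapply is_derive_eq.
    + apply is_derive_Rplus; apply is_derive_Rsqr; [apply (HX 0%nat) | apply (HY 0%nat)].
    + simpl. ring.
  - eapply is_derive_eq.
    + apply is_derive_Rplus; [exact IHm|].
      apply is_derive_Rplus; apply is_derive_Rsqr; [apply HX | apply HY].
    + simpl. ring.
Qed.

Lemma tail_energy_ge (X Y : nat -> R -> R) (m : nat) (t : R) :
  X 2%nat t ^ 2 + Y 2%nat t ^ 2 <= tail_energy X Y m t.
Proof.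
  unfold tail_energy. induction m as [|m IHm]; [simpl; lra|].
  rewrite tech5. cbv beta.
  pose proof (pow2_ge_0 (X (2 + S m)%nat t)). pose proof (pow2_ge_0 (Y (2 + S m)%nat t)). lra.
Qed.

Definition cut_energy (n : nat) (X Y : nat -> R -> R) (xa ya xb yb : R -> R)
  (m : nat) (t : R) : R :=
  (INR n - 1) * ((X 0%nat t - xa t) ^ 2 + (Y 0%nat t - ya t) ^ 2)
  + (X 1%nat t - xb t) ^ 2 + (Y 1%nat t - yb t) ^ 2 + tail_energy X Y m t.

(* The weights (n-1, 1, 1, ...) make chain_op symmetric, so only the cut edge
   and the truncation contribute to the derivative. *)
Lemma cut_energy_derive (n : nat) (ga : R) (X Y : nat -> R -> R) (xa ya xb yb : R -> R)
  (m : nat) (t : R) :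
  chain_solution n ga X Y -> cut_solution n ga xa ya xb yb ->
  is_derive (cut_energy n X Y xa ya xb yb m) t
    (2 * (Y 2%nat t * xb t - X 2%nat t * yb t) + 2 * flux X Y (2 + m) t).
Proof.
  intros [HX HY] (Hxa & Hya & Hxb & Hyb).
  assert (Htail := tail_energy_derive X Y (fun p => HX (2 + p)%nat)
                     (fun p => HY (2 + p)%nat) m t).
  specialize (HX 0%nat t) as HX0. specialize (HX 1%nat t) as HX1.
  specialize (HY 0%nat t) as HY0. specialize (HY 1%nat t) as HY1.
  simpl chain_op in *.
  unfold cut_energy. eapply is_derive_eq.
  - apply is_derive_Rplus; [apply is_derive_Rplus; [apply is_derive_Rplus|]|]; [| | |exact Htail].
    + apply (is_derive_scal (fun s => (X 0%nat s - xa s) ^ 2 + (Y 0%nat s - ya s) ^ 2)).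
      apply is_derive_Rplus; apply is_derive_Rsqr; apply is_derive_Rminus; eauto.
    + apply is_derive_Rsqr, is_derive_Rminus; eauto.
    + apply is_derive_Rsqr, is_derive_Rminus; eauto.
  - unfold flux. simpl. ring.
Qed.

Lemma cut_energy_ge (n : nat) (X Y : nat -> R -> R) (xa ya xb yb : R -> R) (m : nat) (t : R) :
  (1 <= n)%nat ->
  (X 1%nat t - xb t) ^ 2 + (Y 1%nat t - yb t) ^ 2 + (X 2%nat t ^ 2 + Y 2%nat t ^ 2)
  <= cut_energy n X Y xa ya xb yb m t.
Proof.
  intros Hn. unfold cut_energy.
  assert (0 <= INR n - 1) by (apply (le_INR 1) in Hn; simpl in Hn; lra).
  pose proof (tail_energy_ge X Y m t).
  pose proof (pow2_ge_0 (X 0%nat t - xa t)). pose proof (pow2_ge_0 (Y 0%nat t - ya t)).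
  nra.
Qed.

Lemma chain_cut_distance (n : nat) (ga T eta dl : R) (m : nat) (X Y : nat -> R -> R)
  (xa ya xb yb : R -> R) :
  (1 <= n)%nat -> 0 <= T -> 0 < eta -> 0 <= dl ->
  chain_solution n ga X Y -> cut_solution n ga xa ya xb yb ->
  cut_energy n X Y xa ya xb yb m 0 = 0 ->
  (forall t, 0 <= t <= T -> xb t ^ 2 + yb t ^ 2 <= 4) ->
  (forall t, 0 <= t <= T -> Rabs (flux X Y (2 + m) t) <= dl) ->
  sqrt ((X 1%nat T - xb T) ^ 2 + (Y 1%nat T - yb T) ^ 2) <= sqrt eta + T * (2 + dl / sqrt eta).
Proof.
  intros Hn HT Heta Hdl Hsol Hcut HE0 Hxb Hflux.
  set (E := cut_energy n X Y xa ya xb yb m).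
  assert (HEge := fun t => cut_energy_ge n X Y xa ya xb yb m t Hn).
  fold E in HEge.
  assert (HEpos : forall t, 0 <= E t).
  { intros t. specialize (HEge t). pose proof (pow2_ge_0 (X 1%nat t - xb t)).
    pose proof (pow2_ge_0 (Y 1%nat t - yb t)). pose proof (pow2_ge_0 (X 2%nat t)).
    pose proof (pow2_ge_0 (Y 2%nat t)). lra. }
  replace (2 + dl / sqrt eta) with (2 + 2 * dl / (2 * sqrt eta))
    by (field; apply Rgt_not_eq, sqrt_lt_R0; exact Heta).
  eapply Rle_trans; [|apply (sqrt_growth E
    (fun t => 2 * (Y 2%nat t * xb t - X 2%nat t * yb t) + 2 * flux X Y (2 + m) t)
    2 (2 * dl) T eta); try lra].
  - apply sqrt_le_1_alt. specialize (HEge T). pose proof (pow2_ge_0 (X 2%nat T)).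
    pose proof (pow2_ge_0 (Y 2%nat T)). lra.
  - intros t. now apply (cut_energy_derive n ga).
  - exact HEpos.
  - exact HE0.
  - intros t Ht.
    assert (Hx2 : sqrt (X 2%nat t ^ 2 + Y 2%nat t ^ 2) <= sqrt (E t)).
    { apply sqrt_le_1_alt. specialize (HEge t). pose proof (pow2_ge_0 (X 1%nat t - xb t)).
      pose proof (pow2_ge_0 (Y 1%nat t - yb t)). lra. }
    assert (Hb2 : sqrt (xb t ^ 2 + yb t ^ 2) <= 2).
    { rewrite <- (sqrt_pow2 2) by lra. apply sqrt_le_1_alt. specialize (Hxb t Ht). lra. }
    pose proof (cross_le_norm_mul (X 2%nat t) (Y 2%nat t) (xb t) (yb t)).
    pose proof (sqrt_pos (X 2%nat t ^ 2 + Y 2%nat t ^ 2)).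
    pose proof (sqrt_pos (xb t ^ 2 + yb t ^ 2)).
    pose proof (Rle_abs (flux X Y (2 + m) t)). specialize (Hflux t Ht).
    nra.
Qed.

(** * The cut system *)

(* [(beat_re c w z k t, beat_im c w z k t)] is [z e^(ict) (cos (wt) + i k sin (wt))]. *)
Definition beat_re (c w z k t : R) : R :=
  z * (cos (c * t) * cos (w * t) - sin (c * t) * k * sin (w * t)).

Definition beat_im (c w z k t : R) : R :=
  z * (sin (c * t) * cos (w * t) + cos (c * t) * k * sin (w * t)).

Lemma beat_norm (c w z k t : R) :
  beat_re c w z k t ^ 2 + beat_im c w z k t ^ 2
  = z ^ 2 * (cos (w * t) ^ 2 + k ^ 2 * sin (w * t) ^ 2).
Proof. unfold beat_re, beat_im. pose proof (sin2_cos2 (c * t)). unfold Rsqr in *. nra. Qed.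

Lemma beat_0 (c w z k : R) : beat_re c w z k 0 = z /\ beat_im c w z k 0 = 0.
Proof. unfold beat_re, beat_im. rewrite !Rmult_0_r, cos_0, sin_0. split; ring. Qed.

(* The cut block [[c - d, 1], [w^2 - d^2, c + d]] has eigenvalues [c +- w]. *)
Lemma cut_solution_beat (n : nat) (ga c d w z : R) :
  w <> 0 -> c - d = INR n - 2 -> c + d = ga -> w ^ 2 - d ^ 2 = INR n - 1 ->
  cut_solution n ga
    (beat_re c w z ((1 - d) / w)) (beat_im c w z ((1 - d) / w))
    (beat_re c w z ((INR n - 1 + d) / w)) (beat_im c w z ((INR n - 1 + d) / w)).
Proof.
  intros Hw Hdiff Hsum Hdet. unfold cut_solution. rewrite <- Hdiff, <- Hsum, <- Hdet.
  unfold beat_re, beat_im.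
  split; [|split; [|split]]; intros s; auto_derive; auto; field; exact Hw.
Qed.

Definition cut_mean (n : nat) (ga : R) : R := (INR n - 2 + ga) / 2.

Definition cut_skew (n : nat) (ga : R) : R := (ga - (INR n - 2)) / 2.

Definition cut_freq (n : nat) (ga : R) : R := sqrt (cut_skew n ga ^ 2 + INR n - 1).

Definition cut_re (n : nat) (ga t : R) : R :=
  beat_re (cut_mean n ga) (cut_freq n ga) (/ sqrt (INR n))
    ((INR n - 1 + cut_skew n ga) / cut_freq n ga) t.

Definition cut_im (n : nat) (ga t : R) : R :=
  beat_im (cut_mean n ga) (cut_freq n ga) (/ sqrt (INR n))
    ((INR n - 1 + cut_skew n ga) / cut_freq n ga) t.

Definition transfer_time (n : nat) : R := PI / (2 * sqrt (INR n)).

Lemma cut_freq_sq (n : nat) (ga : R) : (2 <= n)%nat ->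
  cut_freq n ga ^ 2 = cut_skew n ga ^ 2 + INR n - 1 /\ 0 < cut_freq n ga.
Proof.
  intros Hn. assert (2 <= INR n) by (apply (le_INR 2); lia).
  pose proof (pow2_ge_0 (cut_skew n ga)).
  unfold cut_freq. split; [apply pow2_sqrt | apply sqrt_lt_R0]; lra.
Qed.

Lemma cut_norm_le (n : nat) (ga t : R) : (2 <= n)%nat ->
  cut_re n ga t ^ 2 + cut_im n ga t ^ 2 <= 4.
Proof.
  intros Hn. assert (Hnn : 2 <= INR n) by (apply (le_INR 2); lia).
  unfold cut_re, cut_im. rewrite beat_norm.
  destruct (cut_freq_sq n ga Hn) as [Hw2 Hw].
  set (d := cut_skew n ga) in *. set (w := cut_freq n ga) in *. set (s := w * t).
  assert (Hz : (/ sqrt (INR n)) ^ 2 = / INR n) by (rewrite pow_inv, pow2_sqrt; lra).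
  assert (Hk : ((INR n - 1 + d) / w) ^ 2 <= 2 * INR n).
  { replace (((INR n - 1 + d) / w) ^ 2) with ((INR n - 1 + d) ^ 2 / w ^ 2) by (field; lra).
    rewrite Hw2. apply (Rmult_le_reg_r (d ^ 2 + INR n - 1)); [nra|].
    field_simplify; [|nra].
    assert (0 <= (INR n - 1) * (d - 1) ^ 2) by (apply Rmult_le_pos; [lra | apply pow2_ge_0]).
    assert (0 <= INR n * d ^ 2) by (apply Rmult_le_pos; [lra | apply pow2_ge_0]).
    nra. }
  pose proof (sin2_cos2 s). unfold Rsqr in *.
  assert (((INR n - 1 + d) / w) ^ 2 * sin s ^ 2 <= 2 * INR n).
  { pose proof (pow2_ge_0 (sin s)). pose proof (pow2_ge_0 (cos s)).
    replace (2 * INR n) with (2 * INR n * 1) by ring.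
    apply Rmult_le_compat; try apply pow2_ge_0; nra. }
  rewrite Hz. apply (Rmult_le_reg_l (INR n)); [lra|].
  rewrite <- Rmult_assoc, Rinv_r by lra. simpl in *. nra.
Qed.

Lemma cut_norm_transfer (n : nat) (ga : R) : (2 <= n)%nat ->
  let d := cut_skew n ga in
  let r := d ^ 2 / INR n + 1 - / INR n in
  let q := 1 - / INR n + d / INR n in
  cut_re n ga (transfer_time n) ^ 2 + cut_im n ga (transfer_time n) ^ 2
  = cos (PI / 2 * sqrt r) ^ 2 / INR n + q ^ 2 / r * sin (PI / 2 * sqrt r) ^ 2.
Proof.
  intros Hn d r q. assert (Hnn : 2 <= INR n) by (apply (le_INR 2); lia).
  assert (Hsn : 0 < sqrt (INR n)) by (apply sqrt_lt_R0; lra).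
  destruct (cut_freq_sq n ga Hn) as [Hw2 Hw]. fold d in Hw2.
  assert (Hr : r = cut_freq n ga ^ 2 / INR n) by (unfold r; rewrite Hw2; field; lra).
  assert (Hwt : PI / 2 * sqrt r = cut_freq n ga * transfer_time n).
  { rewrite Hr, sqrt_div_alt, sqrt_pow2 by lra. unfold transfer_time. field. lra. }
  unfold cut_re, cut_im. rewrite beat_norm, <- Hwt.
  rewrite pow_inv, pow2_sqrt by lra. fold d.
  replace (((INR n - 1 + d) / cut_freq n ga) ^ 2) with (q ^ 2 / r * INR n)
    by (rewrite Hr; unfold q; field; lra).
  assert (0 < r) by (rewrite Hr; apply Rdiv_lt_0_compat; [apply pow_lt|]; lra).
  field. split; lra.
Qed.

Lemma cut_norm_transfer_lim (d : nat -> R) (D : R) : (forall n, Rabs (d n) <= D) ->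
  let r := fun n => d n ^ 2 / INR n + 1 - / INR n in
  let q := fun n => 1 - / INR n + d n / INR n in
  is_lim_seq (fun n => cos (PI / 2 * sqrt (r n)) ^ 2 / INR n
                       + q n ^ 2 / r n * sin (PI / 2 * sqrt (r n)) ^ 2) 1.
Proof.
  intros Hd r q.
  assert (Hr : is_lim_seq r 1).
  { replace 1 with (0 + 1 - 0) by ring.
    apply is_lim_seq_minus'; [apply is_lim_seq_plus'|];
      [|apply is_lim_seq_const | apply inv_INR_lim].
    apply (bounded_div_INR_lim _ (D ^ 2)). intros n. rewrite <- RPow_abs.
    apply pow_maj_Rabs. rewrite Rabs_Rabsolu. apply Hd. }
  assert (Hq : is_lim_seq q 1).
  { replace 1 with (1 - 0 + 0) by ring.
    apply is_lim_seq_plus'; [apply is_lim_seq_minus'|];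
      [apply is_lim_seq_const | apply inv_INR_lim | now apply (bounded_div_INR_lim _ D)]. }
  assert (Ha : is_lim_seq (fun n => PI / 2 * sqrt (r n)) (PI / 2 * sqrt 1)).
  { apply is_lim_seq_mult'; [apply is_lim_seq_const|].
    apply is_lim_seq_continuous; [apply continuity_pt_sqrt; lra | exact Hr]. }
  rewrite sqrt_1, Rmult_1_r in Ha.
  replace 1 with (cos (PI / 2) ^ 2 * 0 + 1 ^ 2 / 1 * sin (PI / 2) ^ 2)
    by (rewrite cos_PI2, sin_PI2; field).
  unfold Rdiv at 1. apply is_lim_seq_plus'; apply is_lim_seq_mult'.
  - apply is_lim_seq_sqr, is_lim_seq_continuous; [apply continuity_cos | exact Ha].
  - apply inv_INR_lim.
  - apply is_lim_seq_div'; [now apply is_lim_seq_sqr | exact Hr | lra].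
  - apply is_lim_seq_sqr, is_lim_seq_continuous; [apply continuity_sin | exact Ha].
Qed.

Lemma cut_modulus_lim (gamma : nat -> R) (B : R) :
  (forall n, Rabs (gamma n - INR n) <= B) ->
  is_lim_seq (fun n => sqrt (cut_re n (gamma n) (transfer_time n) ^ 2
                             + cut_im n (gamma n) (transfer_time n) ^ 2)) 1.
Proof.
  intros HB.
  assert (Hd : forall n, Rabs (cut_skew n (gamma n)) <= (B + 2) / 2).
  { intros n. unfold cut_skew.
    replace ((gamma n - (INR n - 2)) / 2) with ((gamma n - INR n + 2) / 2) by field.
    unfold Rdiv. rewrite Rabs_mult, (Rabs_right (/ 2)) by lra.
    apply Rmult_le_compat_r; [lra|].
    eapply Rle_trans; [apply Rabs_triang|]. rewrite (Rabs_right 2) by lra.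
    specialize (HB n). lra. }
  rewrite <- sqrt_1. apply is_lim_seq_continuous; [apply continuity_pt_sqrt; lra|].
  eapply is_lim_seq_ext_loc; [|exact (cut_norm_transfer_lim _ _ Hd)].
  exists 2%nat. intros n Hn. now rewrite cut_norm_transfer.
Qed.

(** * The flow of the chain *)

Definition chain_bound (n : nat) (ga : R) : R := INR n + Rabs ga + 2.

(* [(fst (i_pow k), snd (i_pow k))] is [i^k]. *)
Fixpoint i_pow (k : nat) : R * R :=
  match k with O => (1, 0) | S k => (- snd (i_pow k), fst (i_pow k)) end.

Lemma i_pow_bound (k : nat) : Rabs (fst (i_pow k)) <= 1 /\ Rabs (snd (i_pow k)) <= 1.
Proof.
  induction k as [|k IHk]; simpl; [rewrite Rabs_R1, Rabs_R0; lra|].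
  rewrite Rabs_Ropp. lra.
Qed.

Section ChainFlow.

Variables (n : nat) (ga : R).
Hypothesis Hn : (2 <= n)%nat.

Lemma chain_bound_ge0 : 0 <= chain_bound n ga.
Proof. unfold chain_bound. pose proof (pos_INR n). pose proof (Rabs_pos ga). lra. Qed.

Lemma chain_op_bound (v : nat -> R) (B : R) :
  (forall p, Rabs (v p) <= B) -> forall p, Rabs (chain_op n ga v p) <= chain_bound n ga * B.
Proof.
  intros Hv p.
  assert (HB : 0 <= B) by (eapply Rle_trans; [apply Rabs_pos | apply (Hv 0%nat)]).
  assert (H2 : 2 <= INR n) by (apply (le_INR 2); lia).
  pose proof (Rabs_pos ga). pose proof (Hv 0%nat). pose proof (Hv 1%nat).
  destruct p as [|[|q]]; simpl chain_op; unfold chain_bound.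
  - eapply Rle_trans; [apply Rabs_triang|].
    rewrite Rabs_mult, (Rabs_right (INR n - 2)) by lra. nra.
  - eapply Rle_trans; [apply Rabs_triang|].
    eapply Rle_trans; [apply Rplus_le_compat_r, Rabs_triang|].
    rewrite !Rabs_mult, (Rabs_right (INR n - 1)) by lra.
    pose proof (Hv 2%nat).
    assert (Rabs ga * Rabs (v 1%nat) <= Rabs ga * B) by now apply Rmult_le_compat_l.
    nra.
  - eapply Rle_trans; [apply Rabs_triang|].
    pose proof (Hv (S q)). pose proof (Hv (S (S (S q)))). nra.
Qed.

Lemma chain_iter_bound (k p : nat) : Rabs (chain_iter n ga k p) <= chain_bound n ga ^ k.
Proof.
  revert p. induction k as [|k IHk]; intros p.
  - assert (Hs : 1 <= sqrt (INR n)).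
    { rewrite <- sqrt_1. apply sqrt_le_1_alt. apply (le_INR 1); lia. }
    assert (Hinv : 0 < / sqrt (INR n) <= 1).
    { split; [apply Rinv_0_lt_compat; lra|].
      rewrite <- Rinv_1. apply Rinv_le_contravar; lra. }
    simpl. destruct p as [|[|q]]; simpl; rewrite ?Rabs_R0, ?Rabs_right; lra.
  - apply chain_op_bound. exact IHk.
Qed.

Lemma chain_iter_support (k p : nat) : (S k < p)%nat -> chain_iter n ga k p = 0.
Proof.
  revert p. induction k as [|k IHk]; intros p Hp.
  - destruct p as [|[|q]]; [lia | lia | reflexivity].
  - destruct p as [|[|q]]; try lia. simpl.
    rewrite !IHk by lia. ring.
Qed.

Lemma chain_iter_decay (k p : nat) :
  Rabs (chain_iter n ga k p) <= (/ 2) ^ (p - 1) * (2 * chain_bound n ga) ^ k.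
Proof.
  pose proof chain_bound_ge0 as HK.
  destruct (le_lt_dec p (S k)) as [Hp|Hp].
  - eapply Rle_trans; [apply chain_iter_bound|].
    rewrite Rpow_mult_distr.
    assert (Hinv : (/ 2) ^ (p - 1) * 2 ^ (p - 1) = 1)
      by (rewrite <- Rpow_mult_distr, Rinv_l by lra; apply pow1).
    assert (2 ^ (p - 1) <= 2 ^ k) by (apply Rle_pow; [lra | lia]).
    pose proof (pow_le _ k HK). pose proof (pow_le (/ 2) (p - 1) ltac:(lra)).
    assert (1 <= (/ 2) ^ (p - 1) * 2 ^ k) by nra.
    nra.
  - rewrite chain_iter_support, Rabs_R0 by lia.
    apply Rmult_le_pos; apply pow_le; lra.
Qed.

(* [flow_re p t + i flow_im p t] is entry [p] of [e^(itL) chain_init n],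
   with [L = chain_op n ga]. *)
Definition flow_coef (part : R * R -> R) (p k : nat) : R :=
  part (i_pow k) / INR (fact k) * chain_iter n ga k p.

Definition flow_re (p : nat) (t : R) : R := PSeries (flow_coef fst p) t.
Definition flow_im (p : nat) (t : R) : R := PSeries (flow_coef snd p) t.

Lemma flow_series (part : R * R -> R) (p : nat) (t : R) :
  (forall k, Rabs (part (i_pow k)) <= 1) ->
  Rbar_lt (Rabs t) (CV_radius (flow_coef part p))
  /\ Rabs (PSeries (flow_coef part p) t)
     <= (/ 2) ^ (p - 1) * exp (2 * chain_bound n ga * Rabs t).
Proof.
  intros Hpart. pose proof chain_bound_ge0.
  apply PSeries_exp_bound; [lra|]. intros k. unfold flow_coef.
  pose proof (INR_fact_lt_0 k). specialize (Hpart k).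
  pose proof (chain_iter_decay k p). pose proof (Rabs_pos (chain_iter n ga k p)).
  rewrite Rabs_mult, Rabs_div, (Rabs_right (INR (fact k))) by lra.
  unfold Rdiv. rewrite Rmult_comm, <- Rmult_assoc.
  apply Rmult_le_compat_r; [left; now apply Rinv_0_lt_compat|].
  pose proof (Rabs_pos (part (i_pow k))). nra.
Qed.

Lemma ex_flow_re (p : nat) (t : R) : ex_pseries (flow_coef fst p) t.
Proof. apply CV_radius_inside, flow_series. intros k. apply i_pow_bound. Qed.

Lemma ex_flow_im (p : nat) (t : R) : ex_pseries (flow_coef snd p) t.
Proof. apply CV_radius_inside, flow_series. intros k. apply i_pow_bound. Qed.

Lemma flow_bound (p : nat) (t : R) :
  Rabs (flow_re p t) <= (/ 2) ^ (p - 1) * exp (2 * chain_bound n ga * Rabs t)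
  /\ Rabs (flow_im p t) <= (/ 2) ^ (p - 1) * exp (2 * chain_bound n ga * Rabs t).
Proof. split; apply flow_series; intros k; apply i_pow_bound. Qed.

Lemma PS_derive_flow_re (p k : nat) :
  PS_derive (flow_coef fst p) k = - chain_op n ga (fun q => flow_coef snd q k) p.
Proof.
  unfold PS_derive, flow_coef. rewrite chain_op_scal.
  change (chain_iter n ga (S k) p) with (chain_op n ga (chain_iter n ga k) p).
  cbn [i_pow fst snd]. rewrite fact_simpl, mult_INR.
  field. split; [apply INR_fact_neq_0 | apply not_0_INR; lia].
Qed.

Lemma PS_derive_flow_im (p k : nat) :
  PS_derive (flow_coef snd p) k = chain_op n ga (fun q => flow_coef fst q k) p.
Proof.
  unfold PS_derive, flow_coef. rewrite chain_op_scal.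
  change (chain_iter n ga (S k) p) with (chain_op n ga (chain_iter n ga k) p).
  cbn [i_pow fst snd]. rewrite fact_simpl, mult_INR.
  field. split; [apply INR_fact_neq_0 | apply not_0_INR; lia].
Qed.

Lemma chain_solution_flow : chain_solution n ga flow_re flow_im.
Proof.
  split; intros p t.
  - eapply is_derive_eq; [apply is_derive_PSeries, flow_series; intros k; apply i_pow_bound|].
    rewrite (PSeries_ext _ (PS_opp (fun k => chain_op n ga (fun q => flow_coef snd q k) p)))
      by (intros k; apply PS_derive_flow_re).
    now rewrite PSeries_opp, PSeries_chain_op by (intros q; apply ex_flow_im).
  - eapply is_derive_eq; [apply is_derive_PSeries, flow_series; intros k; apply i_pow_bound|].
    rewrite (PSeries_ext _ (fun k => chain_op n ga (fun q => flow_coef fst q k) p))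
      by (intros k; apply PS_derive_flow_im).
    now rewrite PSeries_chain_op by (intros q; apply ex_flow_re).
Qed.

Lemma flow_re_0 (p : nat) : flow_re p 0 = chain_init n p.
Proof. unfold flow_re. rewrite PSeries_0. unfold flow_coef. simpl. field. Qed.

Lemma flow_im_0 (p : nat) : flow_im p 0 = 0.
Proof. unfold flow_im. rewrite PSeries_0. unfold flow_coef. simpl. field. Qed.

End ChainFlow.

(* The path energy is truncated at [m]; the flux through the truncation point
   is negligible because the flow decays like [2^-p] along the path. *)
Lemma flow_flux_small (n : nat) (ga T dl : R) : (2 <= n)%nat -> 0 <= T -> 0 < dl ->
  exists m, forall t, 0 <= t <= T ->
    Rabs (flux (flow_re n ga) (flow_im n ga) (2 + m) t) <= dl.
Proof.
  intros Hn HT Hdl.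
  set (eps := Rmin 1 (dl / 2)).
  assert (Heps : 0 < eps) by (apply Rmin_glb_lt; lra).
  assert (Heps1 : eps <= 1) by apply Rmin_l.
  assert (Heps2 : eps <= dl / 2) by apply Rmin_r.
  set (E0 := exp (2 * chain_bound n ga * T)).
  assert (HE0 : 0 < E0) by apply exp_pos.
  destruct (pow_lt_1_zero (/ 2) ltac:(rewrite Rabs_right; lra) (eps / E0))
    as [m Hm]; [now apply Rdiv_lt_0_compat|].
  assert (Hfar : forall p t, 0 <= t <= T -> (m + 2 <= p)%nat ->
             Rabs (flow_re n ga p t) <= eps /\ Rabs (flow_im n ga p t) <= eps).
  { intros p t Ht Hp.
    specialize (Hm (m + 1)%nat ltac:(lia)).
    rewrite Rabs_right in Hm by (apply Rle_ge, pow_le; lra).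
    assert ((/ 2) ^ (p - 1) * exp (2 * chain_bound n ga * Rabs t) <= (/ 2) ^ (m + 1) * E0).
    { apply Rmult_le_compat; [apply pow_le; lra | left; apply exp_pos | |].
      - apply half_pow_antimono. lia.
      - apply exp_le_compat. rewrite Rabs_right by lra.
        pose proof (chain_bound_ge0 n ga). nra. }
    assert ((/ 2) ^ (m + 1) * E0 < eps).
    { apply (Rmult_lt_compat_r E0) in Hm; [|exact HE0].
      unfold Rdiv in Hm. rewrite Rmult_assoc, Rinv_l, Rmult_1_r in Hm; lra. }
    destruct (flow_bound n ga Hn p t). split; lra. }
  exists m. intros t Ht.
  destruct (Hfar (2 + m)%nat t Ht ltac:(lia)) as [A1 A2].
  destruct (Hfar (S (2 + m)) t Ht ltac:(lia)) as [A3 A4].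
  unfold flux. eapply Rle_trans; [apply Rabs_triang|]. rewrite Rabs_Ropp, !Rabs_mult.
  pose proof (Rabs_pos (flow_re n ga (2 + m) t)).
  pose proof (Rabs_pos (flow_re n ga (S (2 + m)) t)).
  pose proof (Rabs_pos (flow_im n ga (2 + m) t)).
  pose proof (Rabs_pos (flow_im n ga (S (2 + m)) t)).
  nra.
Qed.

Lemma pow_n_mult_Ci (t : R) (k : nat) :
  pow_n (Copp (Cmult Ci (RtoC t))) k = (fst (i_pow k) * t ^ k, - (snd (i_pow k) * t ^ k)).
Proof.
  induction k as [|k IHk].
  - apply injective_projections; simpl; ring.
  - simpl pow_n. rewrite IHk. unfold mult; simpl. unfold Copp, Cmult, Ci, RtoC; simpl.
    apply injective_projections; simpl; ring.
Qed.

Lemma amp_term_flow_coef (n : nat) (ga t : R) (k : nat) : (2 <= n)%nat ->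
  amp_term n ga t k
  = (flow_coef n ga fst 1 k * t ^ k, - (flow_coef n ga snd 1 k * t ^ k)).
Proof.
  intros Hn. unfold amp_term. rewrite Hpow_z1, pow_n_mult_Ci by exact Hn.
  unfold chain_lift. destruct (Nat.eqb_spec n 0), (Nat.ltb_spec0 n n); try lia.
  replace (n - n + 1)%nat with 1%nat by lia.
  unfold flow_coef. pose proof (INR_fact_neq_0 k).
  unfold Cdiv, Cmult, Cinv, RtoC; simpl. apply injective_projections; simpl; field; auto.
Qed.

Lemma amp_flow (n : nat) (ga t : R) : (2 <= n)%nat ->
  amp n ga t = (flow_re n ga 1 t, - flow_im n ga 1 t).
Proof.
  intros Hn. unfold amp. apply (lim_filtermap_eventually C_AbsRing C_CompleteNormedModule).
  apply (filterlim_ext (fun N => (sum_n (fun k => flow_coef n ga fst 1 k * t ^ k) N,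
                                 sum_n (fun k => - (flow_coef n ga snd 1 k * t ^ k)) N) : C)).
  { intros N. rewrite <- sum_n_pair. apply sum_n_ext. intros k.
    now rewrite amp_term_flow_coef. }
  assert (Hre : is_series (fun k => flow_coef n ga fst 1 k * t ^ k) (flow_re n ga 1 t)).
  { eapply is_series_ext; [|apply PSeries_correct, (ex_flow_re n ga Hn)].
    intros k. simpl. now rewrite pow_n_pow, Rmult_comm. }
  assert (Him : is_series (fun k => - (flow_coef n ga snd 1 k * t ^ k)) (- flow_im n ga 1 t)).
  { apply (is_series_opp (fun k => flow_coef n ga snd 1 k * t ^ k)).
    eapply is_series_ext; [|apply PSeries_correct, (ex_flow_im n ga Hn)].
    intros k. simpl. now rewrite pow_n_pow, Rmult_comm. }
  apply filterlim_locally. intros eps.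
  exact (filter_and _ _ (proj1 (filterlim_locally _ _) Hre eps)
                        (proj1 (filterlim_locally _ _) Him eps)).
Qed.

Lemma cut_energy_flow_0 (n : nat) (ga : R) (kA kB : R) (m : nat) :
  let c := cut_mean n ga in let w := cut_freq n ga in let z := / sqrt (INR n) in
  cut_energy n (flow_re n ga) (flow_im n ga) (beat_re c w z kA) (beat_im c w z kA)
    (beat_re c w z kB) (beat_im c w z kB) m 0 = 0.
Proof.
  intros c w z. unfold cut_energy, tail_energy.
  rewrite !(proj1 (beat_0 _ _ _ _)), !(proj2 (beat_0 _ _ _ _)), !flow_re_0, !flow_im_0.
  rewrite sum_eq_R0; [cbn [chain_init]; unfold z; ring|].
  intros j _. rewrite flow_re_0, flow_im_0. cbn [chain_init Nat.add]. ring.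
Qed.

Lemma amp_near_cut (n : nat) (ga : R) : (2 <= n)%nat ->
  Rabs (Cmod (amp n ga (transfer_time n))
        - sqrt (cut_re n ga (transfer_time n) ^ 2 + cut_im n ga (transfer_time n) ^ 2))
  <= (1 + 2 * PI) / sqrt (INR n).
Proof.
  intros Hn. assert (Hnn : 2 <= INR n) by (apply (le_INR 2); lia).
  assert (Hsn : 0 < sqrt (INR n)) by (apply sqrt_lt_R0; lra).
  set (T := transfer_time n).
  assert (HT : 0 <= T) by (unfold T, transfer_time; pose proof PI_RGT_0;
                           apply Rlt_le, Rdiv_lt_0_compat; lra).
  set (eta := / INR n).
  assert (Heta : 0 < eta) by (apply Rinv_0_lt_compat; lra).
  assert (Hseta : 0 < sqrt eta) by now apply sqrt_lt_R0.
  destruct (flow_flux_small n ga T (2 * sqrt eta) Hn HT ltac:(lra)) as [m Hflux].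
  destruct (cut_freq_sq n ga Hn) as [Hw2 Hw].
  rewrite amp_flow by exact Hn. unfold Cmod; simpl fst; simpl snd.
  replace ((- flow_im n ga 1 T) ^ 2) with (flow_im n ga 1 T ^ 2) by ring.
  eapply Rle_trans; [apply norm2_reverse_triangle|].
  set (kA := (1 - cut_skew n ga) / cut_freq n ga).
  set (z := / sqrt (INR n)).
  eapply Rle_trans; [apply (chain_cut_distance n ga T eta (2 * sqrt eta) m
      (flow_re n ga) (flow_im n ga)
      (beat_re (cut_mean n ga) (cut_freq n ga) z kA)
      (beat_im (cut_mean n ga) (cut_freq n ga) z kA)); try lia; try lra|].
  - apply chain_solution_flow, Hn.
  - apply (cut_solution_beat n ga (cut_mean n ga) (cut_skew n ga) (cut_freq n ga)).
    + lra.
    + unfold cut_mean, cut_skew. field.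
    + unfold cut_mean, cut_skew. field.
    + rewrite Hw2. ring.
  - apply cut_energy_flow_0.
  - intros t _. now apply cut_norm_le.
  - exact Hflux.
  - replace (2 + 2 * sqrt eta / sqrt eta) with 4 by (field; lra).
    unfold eta, T, transfer_time. rewrite sqrt_inv. apply Req_le. field. lra.
Qed.

Theorem mainTheorem2 (gamma : nat -> R)
  (Hgamma : exists B : R, forall n : nat, Rabs (gamma n - INR n) <= B) :
  is_lim_seq
    (fun n : nat => Cmod (amp n (gamma n) (PI / (2 * sqrt (INR n))))) 1.
Proof.
  destruct Hgamma as [B HB].
  set (cut := fun n => sqrt (cut_re n (gamma n) (transfer_time n) ^ 2
                             + cut_im n (gamma n) (transfer_time n) ^ 2)).
  set (err := fun n => (1 + 2 * PI) / sqrt (INR n)).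
  assert (Herr : is_lim_seq err 0) by apply const_div_sqrt_INR_lim.
  apply (is_lim_seq_le_le_loc (fun n => cut n - err n) _ (fun n => cut n + err n)).
  - exists 2%nat. intros n Hn.
    pose proof (proj1 (Rabs_le_between _ _) (amp_near_cut n (gamma n) Hn)).
    unfold cut, err, transfer_time in *. lra.
  - replace (Finite 1) with (Finite (1 - 0)) by (f_equal; ring).
    apply is_lim_seq_minus'; [apply (cut_modulus_lim gamma B HB) | exact Herr].
  - replace (Finite 1) with (Finite (1 + 0)) by (f_equal; ring).
    apply is_lim_seq_plus'; [apply (cut_modulus_lim gamma B HB) | exact Herr].
Qed.
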